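(* There is an absolute constant $c>0$ such that for all integers $\sigma\ge1$ and $n$ with $\sigma<n-1$, and every string $T\in[1..\sigma]^{n-1}\#$, the number of arcs of $\mathsf{CDAWG}_T$, namely $|\mathcal{E}^r_T|+|\mathcal{F}^r_T|$, is at least $c\log n$.
   Context: Let $\#=0\notin[1..\sigma]$ and $T\in[1..\sigma]^{n-1}\#$. For a string $W$, $\mathcal{P}_T(W)$ is the set of starting positions of occurrences of $W$ in circular $T$; $\Sigma^{\ell}_T(W)=\{a: \mathcal{P}_T(aW)\neq\emptyset\}$, $\Sigma^{r}_T(W)=\{b:\mathcal{P}_T(Wb)\ne\emptyset\}$. A repeat is a string $W$ (possibly empty) with $|\mathcal{P}_T(W)|>1$; right-maximal iff $|\Sigma^r_T(W)|>1$, left-maximal iff $|\Sigma^\ell_T(W)|>1$, maximal repeat iff both; $\mathcal{M}_T$ is the set of maximal repeats. $\mathsf{ST}_T$ is the suffix tree of $T$, $\ell(v)$ the label of node $v$. $\mathcal{E}^r_T$ (resp. $\mathcal{F}^r_T$) is the set of edges $(v,w)$ of $\mathsf{ST}_T$ with $v=\mathrm{parent}(w)$, $\ell(v)\in\mathcal{M}_T$ and $\ell(w)\in\mathcal{M}_T$ (resp. $\ell(w)\notin\mathcal{M}_T$). The compact directed acyclic word graph $\mathsf{CDAWG}_T$ is the minimal compact automaton of the suffixes of $T$; its nodes are the maximal repeats of $T$ (the empty string being the source) plus one sink, and its arcs are in one-to-one correspondence with $\mathcal{E}^r_T\cup\mathcal{F}^r_T$ (equivalently, with pairs $(W,b)$,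 $W\in\mathcal{M}_T$, $b\in\Sigma^r_T(W)$). *)

From Stdlib Require Import Reals.
From mathcomp Require Import all_boot.
Set Implicit Arguments. Unset Strict Implicit. Unset Printing Implicit Defensive.

(* Strings are seq nat; the terminator # is 0; positions are 0-based. *)

Definition occurs_at (T W : seq nat) (i : nat) : bool :=
  (i < size T) && all (fun j => nth 0 T ((i + j) %% size T) == nth 0 W j) (iota 0 (size W)).

Definition occ (T W : seq nat) : seq nat := [seq i <- iota 0 (size T) | occurs_at T W i].

Definition left_ext (T W : seq nat) (a : nat) : Prop := occ T (a :: W) != [::].
Definition right_ext (T W : seq nat) (b : nat) : Prop := occ T (rcons W b) != [::].

Definition is_repeat (T W : seq nat) : Prop := 1 < size (occ T W).
Definition right_maximal (T W : seq nat) : Prop :=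
  exists b1 b2, b1 <> b2 /\ right_ext T W b1 /\ right_ext T W b2.
Definition left_maximal (T W : seq nat) : Prop :=
  exists a1 a2, a1 <> a2 /\ left_ext T W a1 /\ left_ext T W a2.

Definition maximal_repeat (T W : seq nat) : Prop :=
  is_repeat T W /\ right_maximal T W /\ left_maximal T W.

(* Arcs of CDAWG_T: pairs (W, b) with W \in M_T and b \in Sigma^r_T(W). *)
Definition cdawg_arc (T : seq nat) (x : seq nat * nat) : Prop :=
  maximal_repeat T x.1 /\ right_ext T x.1 x.2.

Definition valid_text (sigma n : nat) (T : seq nat) : Prop :=
  size T = n /\ nth 0 T n.-1 = 0 /\ (forall i, i < n.-1 -> 0 < nth 0 T i <= sigma).

From Stdlib Require Import Reals Lra.
From mathcomp Require Import all_boot zify.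
Set Implicit Arguments. Unset Strict Implicit. Unset Printing Implicit Defensive.

(* Let A(u) be the number of arcs (W, b) of the CDAWG such that u is a factor
   of W.  By downward induction on |u|, u has at most 2^A(u) occurrences.
   A string of length at least n occurs at most once, because # occurs once.
   If u has at most one right (or left) extension c, its occurrences are
   those of uc (or cu), and A(uc) <= A(u).  Otherwise, unless u occurs at most
   once, u is a maximal repeat with k >= 2 right extensions b; the k arcs
   (u, b) are counted by A(u) but by no A(ub), so
   |P(u)| = sum_b |P(ub)| <= k 2^(A(u) - k) <= 2^A(u).
   For u empty this reads n <= 2^#arcs, which gives c = 1 since ln 2 < 1. *)

Definition occurs (T W : seq nat) (i : nat) : bool :=
  all (fun j => nth 0 T ((i + j) %% size T) == nth 0 W j) (iota 0 (size W)).

Lemma size_occ T W : size (occ T W) = count (occurs T W) (iota 0 (size T)).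
Proof.
rewrite size_filter; apply: eq_in_count => i; rewrite mem_iota => /andP[_ hi].
by rewrite /occurs_at hi.
Qed.

Lemma occ_nonnil T W : occ T W != [::] -> exists i, occurs T W i.
Proof. by rewrite -size_eq0 size_occ -lt0n -has_count => /hasP[i _]; exists i. Qed.

Lemma occurs_nth T W i j : occurs T W i -> j < size W ->
  nth 0 W j = nth 0 T ((i + j) %% size T).
Proof. by move=> /allP occ_i hj; apply/esym/eqP/occ_i; rewrite mem_iota. Qed.

Lemma occurs_rcons T W b i :
  occurs T (rcons W b) i = occurs T W i && (nth 0 T ((i + size W) %% size T) == b).
Proof.
rewrite /occurs size_rcons -addn1 iotaD all_cat /= add0n nth_rcons ltnn eqxx andbT.
congr andb; apply: eq_in_all => j; rewrite mem_iota => /andP[_ hj].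
by rewrite nth_rcons hj.
Qed.

Lemma occurs_cons T a W i :
  occurs T (a :: W) i = (nth 0 T (i %% size T) == a) && occurs T W i.+1.
Proof.
rewrite /occurs /= addn0; congr andb.
by rewrite (iotaDl 1 0) all_map; apply: eq_all => j /=; rewrite add1n addnS.
Qed.

Lemma occurs_addn_size T W i : occurs T W (i + size T) = occurs T W i.
Proof. by apply: eq_all => j; rewrite addnAC modnDr. Qed.

Lemma size_occ_nil T : size (occ T [::]) = size T.
Proof. by rewrite size_occ (eq_count (a2 := predT)) ?count_predT ?size_iota. Qed.

Lemma count_succ_iota (P : pred nat) k : P k = P 0 ->
  count (fun i => P i.+1) (iota 0 k) = count P (iota 0 k).
Proof.
have -> : count (fun i => P i.+1) (iota 0 k) = count P (iota 1 k).
  by rewrite (iotaDl 1 0) count_map.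
case: k => [|k] Pk //.
have -> : iota 1 k.+1 = iota 1 k ++ [:: k.+1] by rewrite -(addn1 k) iotaD addnC.
by rewrite count_cat /= Pk addn0 addnC.
Qed.

Lemma sum_count_partition (A s : seq nat) (f : nat -> nat) (P : pred nat) :
  uniq A -> {in s, forall i, f i \in A} ->
  \sum_(b <- A) count (fun i => P i && (f i == b)) s = count P s.
Proof.
move=> uA; elim: s => [|i s IH] fA /=; first by rewrite big1_seq.
rewrite big_split /= IH => [|j sj]; last by apply: fA; rewrite inE sj orbT.
have cA : count_mem (f i) A = 1 by rewrite count_uniq_mem // fA ?mem_head.
congr (_ + _); rewrite -[RHS]muln1 -cA -sum1_count big_distrr [RHS]big_mkcond /=.
by apply: eq_bigr => b _; rewrite eq_sym; case: (b == f i); rewrite ?andbT ?andbF ?muln1.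
Qed.

Lemma sum_size_nonnil (I J : eqType) (A : seq I) (F : I -> seq J) :
  \sum_(b <- A) size (F b) = \sum_(b <- [seq b <- A | F b != [::]]) size (F b).
Proof. by rewrite big_filter [RHS]big_mkcond; apply: eq_bigr => b _; case: (F b). Qed.

Lemma two_witnessesP (X : eqType) (A : seq X) (p : pred X) :
  uniq A -> {subset p <= A} ->
  (exists x1 x2, x1 <> x2 /\ p x1 /\ p x2) <-> 1 < size [seq x <- A | p x].
Proof.
move=> uA pA; split => [[x1 [x2 [/eqP x12 [px1 px2]]]] | ].
  apply: (@uniq_leq_size _ [:: x1; x2]); first by rewrite /= inE x12.
  by move=> x; rewrite !inE mem_filter => /orP[] /eqP->; rewrite ?px1 ?px2 pA.
case E: [seq x <- A | p x] => [|x1 [|x2 s]] // _.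
have /andP[] : uniq (x1 :: x2 :: s) by rewrite -E filter_uniq.
rewrite inE negb_or => /andP[/eqP x12 _] _.
have sub : {subset x1 :: x2 :: s <= p} by move=> x; rewrite -E mem_filter => /andP[].
exists x1, x2; split=> //; split; apply: sub.
  exact: mem_head.
by rewrite inE mem_head orbT.
Qed.

Lemma count_disjoint_le (X : Type) (a1 a2 b : pred X) (s : seq X) :
  (forall x, a1 x -> ~~ a2 x) -> (forall x, a1 x || a2 x -> b x) ->
  count a1 s + count a2 s <= count b s.
Proof.
move=> disj sub; rewrite -count_predUI (@eq_count _ (predI a1 a2) pred0).
  by rewrite count_pred0 addn0; apply: sub_count.
by move=> x /=; case a1x: (a1 x); rewrite //= (negbTE (disj x a1x)).
Qed.

Lemma sum_le_one_term (K : seq nat) (F : nat -> nat) :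
  size K <= 1 -> exists b, \sum_(c <- K) F c <= F b.
Proof.
case: K => [|b [|]] // _; first by exists 0; rewrite big_nil.
by exists b; rewrite big_seq1.
Qed.

Fixpoint words (A : seq nat) (k : nat) : seq (seq nat) :=
  if k is k'.+1 then [seq a :: w | a <- A, w <- words A k'] else [:: [::]].

Lemma mem_words (A w : seq nat) : all (mem A) w -> w \in words A (size w).
Proof. by elim: w => [|a w IH] //= /andP[aA /IH wA]; apply: allpairs_f. Qed.

Definition right_support sigma T W :=
  [seq b <- iota 0 sigma.+1 | occ T (rcons W b) != [::]].
Definition left_support sigma T W :=
  [seq a <- iota 0 sigma.+1 | occ T (a :: W) != [::]].

Definition maximal_repeatb sigma T W :=
  [&& 1 < size (occ T W), 1 < size (right_support sigma T W)
    & 1 < size (left_support sigma T W)].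

Definition cdawg_arcb sigma T (x : seq nat * nat) :=
  maximal_repeatb sigma T x.1 && (occ T (rcons x.1 x.2) != [::]).

Definition arcs_above (L : seq (seq nat * nat)) u := count (fun x => infix u x.1) L.

Lemma arcs_above_infix L u v : infix u v -> arcs_above L v <= arcs_above L u.
Proof. by move=> uv; apply: sub_count => x /= /(infix_trans uv). Qed.

Lemma arcs_above_nil L : arcs_above L [::] = size L.
Proof.
by rewrite /arcs_above (eq_count (a2 := predT)) ?count_predT // => x; exact: infix0s.
Qed.

Section Text.

Variables (sigma : nat) (T : seq nat).
Hypothesis letter_T : forall i, nth 0 T i <= sigma.
Hypothesis terminator_T : forall i, i < size T -> (nth 0 T i == 0) = (i == (size T).-1).

Local Notation alphabet := (iota 0 sigma.+1).

Lemma occurs_letter W i j : occurs T W i -> j < size W -> nth 0 W j \in alphabet.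
Proof. by move=> occ_i /(occurs_nth occ_i)->; rewrite mem_iota ltnS letter_T. Qed.

Lemma right_support_ext W b : occ T (rcons W b) != [::] -> b \in alphabet.
Proof.
move=> /occ_nonnil[i occ_i].
have := occurs_letter occ_i (_ : size W < size (rcons W b)).
by rewrite nth_rcons ltnn eqxx size_rcons; apply.
Qed.

Lemma left_support_ext W a : occ T (a :: W) != [::] -> a \in alphabet.
Proof. by move=> /occ_nonnil[i occ_i]; exact: (occurs_letter occ_i (ltn0Sn _)). Qed.

Lemma size_occ_long W : size T <= size W -> size (occ T W) <= 1.
Proof.
move=> long_W; rewrite size_occ -size_filter.
case E: [seq i <- iota 0 (size T) | occurs T W i] => [|i [|j s]] //.
have /andP[] : uniq [:: i, j & s] by rewrite -E filter_uniq ?iota_uniq.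
rewrite inE negb_or => /andP[/eqP ij _] _; exfalso; apply: ij.
have sub : {subset [:: i, j & s] <= [pred k | (k < size T) && occurs T W k]}.
  by move=> k; rewrite -E mem_filter mem_iota /= andbC.
have /andP[lt_i occ_i] := sub i (mem_head _ _).
have /andP[lt_j occ_j] : (j < size T) && occurs T W j.
  by apply: sub; rewrite !inE eqxx orbT.
(* The occurrence at i has # at offset d, hence so has the occurrence at j. *)
set d := (size T).-1 - i.
have lt_d : d < size W by rewrite /d; lia.
have id_end : i + d = (size T).-1 by rewrite /d; lia.
have jd_end : (j + d) %% size T = (size T).-1.
  apply/eqP; rewrite -terminator_T ?ltn_mod; last lia.
  rewrite -(occurs_nth occ_j lt_d) (occurs_nth occ_i lt_d) id_end.
  by rewrite modn_small ?terminator_T; lia.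
have : j + d = i + d %[mod size T] by rewrite jd_end id_end modn_small //; lia.
by move/eqP; rewrite eqn_modDr !modn_small // => /eqP.
Qed.

Lemma size_occ_rcons_sum W :
  size (occ T W) = \sum_(b <- right_support sigma T W) size (occ T (rcons W b)).
Proof.
rewrite -sum_size_nonnil.
under eq_bigr => b _ do rewrite size_occ (eq_count (occurs_rcons T W b)).
rewrite size_occ sum_count_partition ?iota_uniq // => i _.
by rewrite mem_iota ltnS letter_T.
Qed.

Lemma size_occ_cons_sum W :
  size (occ T W) = \sum_(a <- left_support sigma T W) size (occ T (a :: W)).
Proof.
rewrite -sum_size_nonnil.
under eq_bigr => a _ do rewrite size_occ (eq_count (occurs_cons T a W)).
under eq_bigr => a _ do rewrite (eq_count (fun i => andbC _ (occurs T W i.+1))).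
rewrite sum_count_partition ?iota_uniq //; last first.
  by move=> i _; rewrite mem_iota ltnS letter_T.
by rewrite size_occ count_succ_iota // -[size T]add0n occurs_addn_size.
Qed.

Lemma right_maximalE W : right_maximal T W <-> 1 < size (right_support sigma T W).
Proof. by apply: two_witnessesP; [exact: iota_uniq | exact: right_support_ext]. Qed.

Lemma left_maximalE W : left_maximal T W <-> 1 < size (left_support sigma T W).
Proof. by apply: two_witnessesP; [exact: iota_uniq | exact: left_support_ext]. Qed.

Lemma maximal_repeatP W : maximal_repeat T W <-> maximal_repeatb sigma T W.
Proof.
rewrite /maximal_repeat /maximal_repeatb right_maximalE left_maximalE.
by split=> [[-> [-> ->]] | /and3P[]].
Qed.

Lemma cdawg_arcP x : cdawg_arc T x <-> cdawg_arcb sigma T x.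
Proof.
rewrite /cdawg_arc /cdawg_arcb maximal_repeatP.
by split=> [[-> ->] | /andP[]].
Qed.

Lemma occ_le_rcons W : size (right_support sigma T W) <= 1 ->
  exists b, size (occ T W) <= size (occ T (rcons W b)).
Proof. by rewrite size_occ_rcons_sum; apply: sum_le_one_term. Qed.

Lemma occ_le_cons W : size (left_support sigma T W) <= 1 ->
  exists a, size (occ T W) <= size (occ T (a :: W)).
Proof. by rewrite size_occ_cons_sum; apply: sum_le_one_term. Qed.

Section ArcCount.

Variable L : seq (seq nat * nat).
Hypothesis arcs_in_L : forall x, cdawg_arc T x -> x \in L.

Lemma arcs_above_branch u b : maximal_repeat T u ->
  arcs_above L (rcons u b) + size (right_support sigma T u) <= arcs_above L u.
Proof.
move=> max_u.
have arcs_u : size (right_support sigma T u) <= count (fun x => x.1 == u) L.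
  rewrite -size_filter -(size_map (pair u)); apply: uniq_leq_size.
    by rewrite map_inj_uniq ?filter_uniq ?iota_uniq // => c d [].
  move=> x /mapP[c]; rewrite mem_filter => /andP[ext_c _] ->.
  by rewrite mem_filter eqxx arcs_in_L.
apply: leq_trans (leq_add (leqnn _) arcs_u) (count_disjoint_le _ _ _) => x /=.
  by move=> /size_infix; rewrite size_rcons; apply: contraTN => /eqP->; rewrite ltnn.
by case/orP => [|/eqP->]; [exact: infix_trans (infix_rcons u b) | exact: infix_refl].
Qed.

Lemma size_occ_le_exp u : size (occ T u) <= 2 ^ arcs_above L u.
Proof.
have [d] := ubnP (size T - size u); elim: d u => // d IH u le_d.
have [long | short] := leqP (size T) (size u).
  by apply: leq_trans (size_occ_long long) _; rewrite expn_gt0.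
have IHr b : size (occ T (rcons u b)) <= 2 ^ arcs_above L (rcons u b).
  by apply: IH; rewrite size_rcons; lia.
have IHl a : size (occ T (a :: u)) <= 2 ^ arcs_above L (a :: u).
  by apply: IH => /=; lia.
have [right_le1 | right_gt1] := leqP (size (right_support sigma T u)) 1.
  have [b occ_b] := occ_le_rcons right_le1.
  apply: leq_trans occ_b (leq_trans (IHr b) _).
  by rewrite leq_pexp2l // arcs_above_infix // infix_rcons.
have [left_le1 | left_gt1] := leqP (size (left_support sigma T u)) 1.
  have [a occ_a] := occ_le_cons left_le1.
  apply: leq_trans occ_a (leq_trans (IHl a) _).
  by rewrite leq_pexp2l // arcs_above_infix // infix_cons.
have [occ_le1 | occ_gt1] := leqP (size (occ T u)) 1.
  by apply: leq_trans occ_le1 _; rewrite expn_gt0.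
have max_u : maximal_repeat T u by apply/maximal_repeatP/and3P.
have branch b := arcs_above_branch b max_u.
set K := right_support sigma T u in right_gt1 branch *.
have le_K : size K <= arcs_above L u.
  by apply: leq_trans (leq_addl _ _) (branch 0).
rewrite size_occ_rcons_sum -/K.
apply: (@leq_trans (\sum_(b <- K) 2 ^ (arcs_above L u - size K))).
  apply: leq_sum => b _; apply: leq_trans (IHr b) _.
  by rewrite leq_pexp2l // leq_subRL // addnC branch.
rewrite big_const_seq count_predT iter_addn_0.
rewrite -{2}(subnKC le_K) expnD [in leqLHS]mulnC leq_mul2r.
by rewrite ltnW ?orbT // ltn_expl.
Qed.

End ArcCount.

Definition cdawg_arcs : seq (seq nat * nat) :=
  let candidates := flatten [seq words alphabet k | k <- iota 0 (size T)] in
  undup [seq x <- [seq (W, b) | W <- candidates, b <- alphabet] | cdawg_arcb sigma T x].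

Lemma mem_cdawg_arcs x : x \in cdawg_arcs <-> cdawg_arc T x.
Proof.
rewrite cdawg_arcP mem_undup mem_filter.
split=> [/andP[] // | arc_x]; rewrite arc_x andTb.
case: x arc_x => W b /andP[/and3P[occ_W _ _] ext_b].
apply/allpairsP; exists (W, b); split=> //; last exact: right_support_ext ext_b.
apply/flatten_mapP; exists (size W).
  rewrite mem_iota add0n /=; apply: contraTT occ_W; rewrite -!leqNgt.
  exact: size_occ_long.
have [i occ_i] : exists i, occurs T W i.
  by apply: occ_nonnil; rewrite -size_eq0 -lt0n ltnW.
apply/mem_words/allP => c /(nthP 0)[j lt_j <-].
exact: occurs_letter occ_i lt_j.
Qed.

End Text.

Lemma valid_text_letter sigma n T : valid_text sigma n T -> forall i, nth 0 T i <= sigma.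
Proof.
move=> [size_T [end_T letters_T]] i.
have [lt_i | ge_i] := ltnP i n.-1; first by case/andP: (letters_T i lt_i).
have [-> | ne_i] := eqVneq i n.-1; first by rewrite end_T.
by rewrite nth_default //; lia.
Qed.

Lemma valid_text_terminator sigma n T : valid_text sigma n T ->
  forall i, i < size T -> (nth 0 T i == 0) = (i == (size T).-1).
Proof.
move=> [size_T [end_T letters_T]] i lt_i; subst n.
have [lt_end | ge_end] := ltnP i (size T).-1.
  by have /andP[pos _] := letters_T i lt_end; rewrite eqn0Ngt pos (ltn_eqF lt_end).
have -> : i = (size T).-1 by lia.
by rewrite end_T !eqxx.
Qed.

Lemma INR_expn2 k : INR (2 ^ k) = pow 2 k.
Proof. by elim: k => [|k IH] //; rewrite expnS mult_INR IH. Qed.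

Lemma ln_le_exponent n k : 0 < n -> n <= 2 ^ k -> Rle (ln (INR n)) (INR k).
Proof.
move=> /ltP/lt_0_INR n_gt0 /leP/le_INR; rewrite INR_expn2 => le_n_2k.
have ln2_le1 : Rle (ln 2) 1.
  rewrite -[X in Rle _ X]ln_exp; apply/Rlt_le/ln_increasing; first lra.
  by have := (@exp_ineq1 1 R1_neq_R0); lra.
apply: (Rle_trans _ (ln (pow 2 k))).
  case: (Rle_lt_or_eq_dec _ _ le_n_2k) => [lt_n_2k | ->]; last exact: Rle_refl.
  by apply/Rlt_le/ln_increasing.
rewrite ln_pow; last lra.
by have := pos_INR k; nra.
Qed.

Theorem lemma4 :
  exists c : R, Rlt 0 c /\
    forall (sigma n : nat) (T : seq nat),
      1 <= sigma -> sigma < n.-1 -> valid_text sigma n T ->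
      exists L : seq (seq nat * nat),
        uniq L /\ (forall x, x \in L <-> cdawg_arc T x) /\
        Rle (Rmult c (ln (INR n))) (INR (size L)).
Proof.
exists R1; split; first exact: Rlt_0_1.
move=> sigma n T _ lt_sigma_n valid_T.
have letter_T := valid_text_letter valid_T.
have terminator_T := valid_text_terminator valid_T.
have arcs_T := mem_cdawg_arcs letter_T terminator_T.
exists (cdawg_arcs sigma T); split; first exact: undup_uniq.
split=> //; rewrite Rmult_1_l; apply: ln_le_exponent; first lia.
have := size_occ_le_exp letter_T terminator_T (fun x => (arcs_T x).2) [::].
by rewrite size_occ_nil arcs_above_nil; case: valid_T => ->.
Qed.
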